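(* Let $M$ be a finite-dimensional $C^*$-algebra, $\Delta:M\to M\otimes M$ an injective (not necessarily unital) $*$-homomorphism with $(\Delta\otimes\mathrm{id})\circ\Delta=(\mathrm{id}\otimes\Delta)\circ\Delta$, and $S:M\to M$ a linear, unital, antimultiplicative, $*$-preserving bijection with $S^2=\mathrm{id}$ and $(S\otimes S)\circ\Delta=\varsigma\circ\Delta\circ S$. Let $\varepsilon:M\to\mathbb{C}$ be a linear map with $(\varepsilon\otimes\mathrm{id})\Delta=(\mathrm{id}\otimes\varepsilon)\Delta=\mathrm{id}$, $\varepsilon(S(x))=\varepsilon(x)$ and $\varepsilon(x^* )=\overline{\varepsilon(x)}$ for all $x\in M$. Put $e=\Delta(1)$ and $\varepsilon_s=\mu(S\otimes\mathrm{id})\Delta$. Then the following two sets of conditions are equivalent: (I) (2) $(\varepsilon\otimes\varepsilon)((x\otimes 1)e(1\otimes y))=\varepsilon(xy)$ for all $x,y\in M$, and (3) $(\varepsilon_s\otimes\mathrm{id})\Delta(x)=(1\otimes x)e$ for all $x\in M$; (II) (A2) $(\varepsilon\otimes\mathrm{id})((x\otimes 1)e(1\otimes y))=(\varepsilon\otimes\mathrm{id})((x\otimes 1)\Delta(y))$ for all $x,y\in M$; (A3) $(\mathrm{id}\otimes\varepsilon\otimes\mathrm{id})[(e\otimes 1)(1\otimes\Delta(x))]=e(1\otimes x)$ for all $x\in M$; (A4) $\varepsilon_s(x)=(\mathrm{id}\otimes\varepsilon)((1\otimes x)e)$ for all $x\in M$.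
   Context: All algebras are finite-dimensional over $\mathbb{C}$. $\varsigma:M\otimes M\to M\otimes M$ is the flip $x\otimes y\mapsto y\otimes x$, and $\mu:M\otimes M\to M$ is the linear map induced by multiplication, $\mu(x\otimes y)=xy$. *)

(* Finite-dimensional algebras are [falgType C] (mathcomp
   falgebra); the algebraic tensor products M (x) M and M (x) M (x) M are
   represented by coordinate arrays w.r.t. the canonical basis [vbasis {:M}]. *)
From HB Require Import structures.
From mathcomp Require Import all_boot all_order all_algebra.
From mathcomp Require Import falgebra.
Set Implicit Arguments. Unset Strict Implicit. Unset Printing Implicit Defensive.
Import Order.TTheory GRing.Theory Num.Theory.
Local Open Scope ring_scope.

Section Tensors.
Variable C : numClosedFieldType.
Variable M : falgType C.

Definition dimM : nat := \dim {:M}.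
Definition bas : dimM.-tuple M := vbasis {:M}.
Definition bi (i : 'I_dimM) : M := tnth bas i.
Definition cf (i : 'I_dimM) (x : M) : C := coord bas i x.

(* M (x) M : coefficient matrices, t = \sum_(i,j) t i j  bi i (x) bi j *)
Definition T2 := 'M[C]_dimM.
Definition T3 := {ffun 'I_dimM * 'I_dimM * 'I_dimM -> C^o}.

Definition t2 (x y : M) : T2 := \matrix_(i, j) (cf i x * cf j y).
Definition t3 (x y z : M) : T3 :=
  [ffun ijk : 'I_dimM * 'I_dimM * 'I_dimM =>
     cf ijk.1.1 x * cf ijk.1.2 y * cf ijk.2 z].

Definition mul2 (s t : T2) : T2 :=
  \sum_(i < dimM) \sum_(j < dimM) \sum_(k < dimM) \sum_(l < dimM)
     (s i j * t k l) *: t2 (bi i * bi k) (bi j * bi l).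
Definition mul3 (s t : T3) : T3 :=
  \sum_(i < dimM) \sum_(j < dimM) \sum_(k < dimM)
  \sum_(i' < dimM) \sum_(j' < dimM) \sum_(k' < dimM)
     (s (i, j, k) * t (i', j', k')) *: t3 (bi i * bi i') (bi j * bi j') (bi k * bi k').

Definition star2 (st : M -> M) (t : T2) : T2 :=
  \sum_(i < dimM) \sum_(j < dimM) (t i j)^* *: t2 (st (bi i)) (st (bi j)).

Definition map2 (f g : M -> M) (t : T2) : T2 :=
  \sum_(i < dimM) \sum_(j < dimM) t i j *: t2 (f (bi i)) (g (bi j)).

Definition flip (t : T2) : T2 :=
  \sum_(i < dimM) \sum_(j < dimM) t i j *: t2 (bi j) (bi i).

Definition mu (t : T2) : M := \sum_(i < dimM) \sum_(j < dimM) t i j *: (bi i * bi j).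

Definition slL (phi : M -> C) (t : T2) : M :=
  \sum_(i < dimM) \sum_(j < dimM) (t i j * phi (bi i)) *: bi j.
Definition slR (phi : M -> C) (t : T2) : M :=
  \sum_(i < dimM) \sum_(j < dimM) (t i j * phi (bi j)) *: bi i.
Definition sl2 (phi psi : M -> C) (t : T2) : C :=
  \sum_(i < dimM) \sum_(j < dimM) t i j * phi (bi i) * psi (bi j).
Definition slMid (phi : M -> C) (u : T3) : T2 :=
  \sum_(i < dimM) \sum_(j < dimM) \sum_(k < dimM)
     (u (i, j, k) * phi (bi j)) *: t2 (bi i) (bi k).

Definition DelL (D : M -> T2) (t : T2) : T3 :=
  \sum_(i < dimM) \sum_(j < dimM) \sum_(k < dimM) \sum_(l < dimM)
     (t i j * D (bi i) k l) *: t3 (bi k) (bi l) (bi j).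
Definition DelR (D : M -> T2) (t : T2) : T3 :=
  \sum_(i < dimM) \sum_(j < dimM) \sum_(k < dimM) \sum_(l < dimM)
     (t i j * D (bi j) k l) *: t3 (bi i) (bi k) (bi l).

Definition ext_r (t : T2) : T3 :=
  \sum_(i < dimM) \sum_(j < dimM) t i j *: t3 (bi i) (bi j) 1.
Definition ext_l (t : T2) : T3 :=
  \sum_(i < dimM) \sum_(j < dimM) t i j *: t3 1 (bi i) (bi j).

Definition star_alg (st : M -> M) : Prop :=
  [/\ forall (a : C) (x y : M), st (a *: x + y) = a^* *: st x + st y,
      forall x, st (st x) = x &
      forall x y, st (x * y) = st y * st x].

(* N is a C*-norm for the involution st (completeness is automatic in
   finite dimension). Norm values are taken in the real part of C. *)
Definition cstar_norm (st : M -> M) (N : M -> C) : Prop :=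
  [/\ forall x, 0 <= N x,
      forall x, N x = 0 -> x = 0,
      forall x y, N (x + y) <= N x + N y &
      forall (a : C) x, N (a *: x) = `|a| * N x] /\
  (forall x y, N (x * y) <= N x * N y) /\
  (forall x, N (st x * x) = N x ^+ 2).

Definition cstar_alg (st : M -> M) : Prop :=
  star_alg st /\ exists N : M -> C, cstar_norm st N.

Definition lin_M (f : M -> M) : Prop :=
  forall (a : C) (x y : M), f (a *: x + y) = a *: f x + f y.
Definition lin_T2 (f : M -> T2) : Prop :=
  forall (a : C) (x y : M), f (a *: x + y) = a *: f x + f y.
Definition lin_C (f : M -> C) : Prop :=
  forall (a : C) (x y : M), f (a *: x + y) = a * f x + f y.

End Tensors.

(* Write G_t(b) = (ε ⊗ id)((b ⊗ 1) t) and K_t(b) = (ε ⊗ id)(t (b ⊗ 1))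
   ([slL_lmul] and [slL_rmul] below). Both sets of conditions are reformulations of
     (A3')  (id ⊗ G_{Δy}) e = e (1 ⊗ y)    and    (K)  (id ⊗ K_{Δx}) e = (1 ⊗ x) e.
   (A3) is (A3') spelled out on three legs. Since ε(x^* ) is the conjugate of ε(x),
   the involution is antimultiplicative and e^* = e, applying * to (K) at x gives (A3')
   at x^*, so (K) and (A3') are equivalent. Given (A4), the left side of (3) is
   (id ⊗ K_{Δx}) e, so (3) is (K); conversely, applying id ⊗ ε to (3) gives (A4) by the
   counit law. Given (A3'), (A2) reads G_{Δy}(z) = G_{Δy}(x) for z = (ε ⊗ id)((x ⊗ 1) e),
   and (2) says that ε(z w) = ε(x w) for all w, which is all that G_{Δy} sees of its
   argument; conversely, ε applied to (A2) gives (2) because ε(x (id ⊗ ε)(Δy)) = ε(x y).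
   Each tensor identity is checked on elementary tensors, both sides being linear or
   conjugate-linear in the tensor arguments ([eq_linear_T2]). *)

From HB Require Import structures.
From mathcomp Require Import all_boot all_order all_algebra.
From mathcomp Require Import falgebra sesquilinear.
From mathcomp Require Import reals complex.
Import Order.TTheory GRing.Theory Num.Theory.
Local Open Scope ring_scope.

Section Tensors.
Set Implicit Arguments. Unset Strict Implicit. Unset Printing Implicit Defensive.
Variables (C : numClosedFieldType) (M : falgType C).
Local Notation T2 := (T2 M).
Local Notation T3 := (T3 M).
Local Notation bi := (@bi C M).
Local Notation cf := (@cf C M).
Local Notation t2 := (@t2 C M).
Local Notation t3 := (@t3 C M).
Local Notation conj_scale := (Num.conj \; *:%R).

Lemma cf_bi i j : cf j (bi i) = (i == j)%:R.
Proof. by rewrite /cf /bi (tnth_nth 0) coord_free //; exact: basis_free (vbasisP _). Qed.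

Lemma cf_is_scalar i : scalar (cf i).
Proof. by move=> a x y; rewrite /cf linearP. Qed.
HB.instance Definition _ i := GRing.isLinear.Build C M C *%R (cf i) (cf_is_scalar i).

Lemma coord_sum (x : M) : x = \sum_i cf i x *: bi i.
Proof.
rewrite {1}(coord_vbasis (memvf x)); apply: eq_bigr => i _.
by rewrite /bi /cf (tnth_nth 0).
Qed.

Lemma linear_coord_sum (V : lmodType C) (f : M -> V) :
  linear f -> forall x, f x = \sum_i cf i x *: f (bi i).
Proof.
move=> fL x; pose fLin : {linear M -> V} := HB.pack f (GRing.isLinear.Build _ _ _ _ f fL).
rewrite -[f x]/(fLin x) {1}[x]coord_sum linear_sum.
by apply: eq_bigr => i _; rewrite linearZ.
Qed.

Lemma t2_is_bilinear : bilinear_for *:%R *:%R t2.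
Proof.
split=> [y | x] a u v; apply/matrixP=> i j; rewrite !mxE linearP /=.
  by rewrite mulrDl mulrA.
by rewrite mulrDr mulrCA.
Qed.
HB.instance Definition _ :=
  bilinear_isBilinear.Build C M M T2 *:%R *:%R t2 t2_is_bilinear.

Lemma t2_bi i j : t2 (bi i) (bi j) = delta_mx i j.
Proof. by apply/matrixP=> k l; rewrite !mxE !cf_bi -natrM mulnb (eq_sym i) (eq_sym j). Qed.

Lemma eq_linear_T2 (V : zmodType) (s : GRing.Scale.law C V) (F G : T2 -> V) :
  linear_for s F -> linear_for s G -> (forall x y, F (t2 x y) = G (t2 x y)) -> F =1 G.
Proof.
move=> FL GL FG t.
pose FLin : {linear T2 -> V | s} := HB.pack F (GRing.isLinear.Build _ _ _ _ F FL).
pose GLin : {linear T2 -> V | s} := HB.pack G (GRing.isLinear.Build _ _ _ _ G GL).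
rewrite -[F t]/(FLin t) -[G t]/(GLin t) (matrix_sum_delta t) !linear_sum.
apply: eq_bigr => i _; rewrite !linear_sum; apply: eq_bigr => j _.
by rewrite !linearZ_LR -t2_bi /= FG.
Qed.

Definition lift2 (V : lmodType C) (B : M -> M -> V) (t : T2) : V :=
  \sum_i \sum_j t i j *: B (bi i) (bi j).
Definition lift3 (V : lmodType C) (B : M -> M -> M -> V) (u : T3) : V :=
  \sum_i \sum_j \sum_k u (i, j, k) *: B (bi i) (bi j) (bi k).

Lemma lift2_is_linear (V : lmodType C) (B : M -> M -> V) : linear (lift2 B).
Proof.
move=> a s t; rewrite scaler_sumr -big_split; apply: eq_bigr => i _.
rewrite scaler_sumr -big_split; apply: eq_bigr => j _.
by rewrite !mxE scalerDl scalerA.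
Qed.
HB.instance Definition _ (V : lmodType C) (B : M -> M -> V) :=
  GRing.isLinear.Build C T2 V *:%R (lift2 B) (lift2_is_linear B).

Lemma lift3_is_linear (V : lmodType C) (B : M -> M -> M -> V) : linear (lift3 B).
Proof.
move=> a s t; rewrite scaler_sumr -big_split; apply: eq_bigr => i _.
rewrite scaler_sumr -big_split; apply: eq_bigr => j _.
rewrite scaler_sumr -big_split; apply: eq_bigr => k _.
by rewrite !ffunE scalerDl scalerA.
Qed.
HB.instance Definition _ (V : lmodType C) (B : M -> M -> M -> V) :=
  GRing.isLinear.Build C T3 V *:%R (lift3 B) (lift3_is_linear B).

Lemma lift2_t2 (V : lmodType C) (B : M -> M -> V) :
  bilinear_for *:%R *:%R B -> forall x y, lift2 B (t2 x y) = B x y.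
Proof.
move=> [BL BR] x y; rewrite (linear_coord_sum (BL y)) /lift2; apply: eq_bigr => i _.
rewrite (linear_coord_sum (BR _)) scaler_sumr; apply: eq_bigr => j _.
by rewrite mxE scalerA.
Qed.

Lemma lift3_t3 (V : lmodType C) (B : M -> M -> M -> V) :
  (forall y z, linear (fun x => B x y z)) -> (forall x z, linear (fun y => B x y z)) ->
  (forall x y, linear (B x y)) -> forall x y z, lift3 B (t3 x y z) = B x y z.
Proof.
move=> L1 L2 L3 x y z; rewrite (linear_coord_sum (L1 y z)) /lift3; apply: eq_bigr => i _.
rewrite (linear_coord_sum (L2 _ z)) scaler_sumr; apply: eq_bigr => j _.
rewrite (linear_coord_sum (L3 _ _)) !scaler_sumr; apply: eq_bigr => k _.
by rewrite ffunE !scalerA.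
Qed.

Lemma lift2_linear_family (U V : lmodType C) (B : U -> M -> M -> V) (t : T2) :
  (forall x y, linear (fun u => B u x y)) -> linear (fun u => lift2 (B u) t).
Proof.
move=> BL a u v; rewrite scaler_sumr -big_split; apply: eq_bigr => i _.
rewrite scaler_sumr -big_split; apply: eq_bigr => j _.
by rewrite BL scalerDr !scalerA mulrC.
Qed.

Lemma lift3_linear_family (U V : lmodType C) (B : U -> M -> M -> M -> V) (t : T3) :
  (forall x y z, linear (fun u => B u x y z)) -> linear (fun u => lift3 (B u) t).
Proof.
move=> BL a u v; rewrite scaler_sumr -big_split; apply: eq_bigr => i _.
rewrite scaler_sumr -big_split; apply: eq_bigr => j _.
rewrite scaler_sumr -big_split; apply: eq_bigr => k _.
by rewrite BL scalerDr !scalerA mulrC.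
Qed.

Lemma t3_linear1 y z : linear (fun x => t3 x y z).
Proof.
move=> a u v; apply/ffunP=> -[[i j] k]; rewrite !ffunE linearP /=.
by rewrite -[a *: _]/(a * _) !mulrDl !mulrA.
Qed.
Lemma t3_linear2 x z : linear (fun y => t3 x y z).
Proof.
move=> a u v; apply/ffunP=> -[[i j] k]; rewrite !ffunE linearP /=.
by rewrite -[a *: _]/(a * _) mulrDr !mulrDl !mulrA [cf i x * a]mulrC.
Qed.
Lemma t3_linear3 x y : linear (t3 x y).
Proof.
move=> a u v; apply/ffunP=> -[[i j] k]; rewrite !ffunE linearP /=.
by rewrite -[a *: _]/(a * _) mulrDr !mulrA [_ * a]mulrC !mulrA.
Qed.

HB.instance Definition _ (f g : M -> M) :=
  GRing.Linear.copy (map2 f g) (lift2 (fun x y => t2 (f x) (g y))).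
HB.instance Definition _ := GRing.Linear.copy (@mu C M) (lift2 *%R).
HB.instance Definition _ := GRing.Linear.copy (@ext_r C M) (lift2 (fun x y => t3 x y 1)).
HB.instance Definition _ := GRing.Linear.copy (@ext_l C M) (lift2 (t3 1)).

Lemma map2l_t2 (f : M -> M) : linear f -> forall x y, map2 f id (t2 x y) = t2 (f x) y.
Proof.
by move=> fL; apply: lift2_t2; split=> [y | x] a u v /=; rewrite ?fL (linearPl, linearPr).
Qed.
Lemma map2r_t2 (g : M -> M) : linear g -> forall x y, map2 id g (t2 x y) = t2 x (g y).
Proof.
by move=> gL; apply: lift2_t2; split=> [y | x] a u v /=; rewrite ?gL (linearPl, linearPr).
Qed.

Lemma eq_map2l (f f' g : M -> M) : f =1 f' -> map2 f g =1 map2 f' g.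
Proof. by move=> ff' t; apply: eq_bigr => i _; apply: eq_bigr => j _; rewrite ff'. Qed.

Lemma ext_r_t2 (x y : M) : ext_r (t2 x y) = t3 x y 1.
Proof.
apply: (lift2_t2 (B := fun u v => t3 u v 1)).
by split=> ?; [apply: t3_linear1 | apply: t3_linear2].
Qed.
Lemma ext_l_t2 (x y : M) : ext_l (t2 x y) = t3 1 x y.
Proof.
apply: (lift2_t2 (B := t3 1)).
by split=> ?; [apply: t3_linear2 | apply: t3_linear3].
Qed.

Lemma slLE (phi : M -> C) : slL phi =1 lift2 (fun x y => phi x *: y).
Proof. by move=> t; apply: eq_bigr => i _; apply: eq_bigr => j _; rewrite scalerA. Qed.
Lemma slRE (phi : M -> C) : slR phi =1 lift2 (fun x y => phi y *: x).
Proof. by move=> t; apply: eq_bigr => i _; apply: eq_bigr => j _; rewrite scalerA. Qed.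
Lemma slMidE (phi : M -> C) : slMid phi =1 lift3 (fun x y z => phi y *: t2 x z).
Proof.
move=> u; apply: eq_bigr => i _; apply: eq_bigr => j _; apply: eq_bigr => k _.
by rewrite scalerA.
Qed.

Lemma slL_is_linear (phi : M -> C) : linear (slL phi).
Proof. by move=> a s t; rewrite !slLE linearP. Qed.
HB.instance Definition _ (phi : M -> C) :=
  GRing.isLinear.Build C T2 M *:%R (slL phi) (slL_is_linear phi).
Lemma slR_is_linear (phi : M -> C) : linear (slR phi).
Proof. by move=> a s t; rewrite !slRE linearP. Qed.
HB.instance Definition _ (phi : M -> C) :=
  GRing.isLinear.Build C T2 M *:%R (slR phi) (slR_is_linear phi).
Lemma slMid_is_linear (phi : M -> C) : linear (slMid phi).
Proof. by move=> a s t; rewrite !slMidE linearP. Qed.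
HB.instance Definition _ (phi : M -> C) :=
  GRing.isLinear.Build C T3 T2 *:%R (slMid phi) (slMid_is_linear phi).

Lemma mul2E s t : mul2 s t = lift2 (fun x y => lift2 (fun u v => t2 (x * u) (y * v)) t) s.
Proof.
apply: eq_bigr => i _; apply: eq_bigr => j _.
rewrite scaler_sumr; apply: eq_bigr => k _; rewrite scaler_sumr.
by apply: eq_bigr => l _; rewrite scalerA.
Qed.

Lemma mul2_is_bilinear : bilinear_for *:%R *:%R (@mul2 C M).
Proof.
split=> [t | s] a u v; rewrite !mul2E; first exact: linearP.
pose B t x y := lift2 (fun u v => t2 (x * u) (y * v)) t.
by apply: (lift2_linear_family (B := B)) => x y; apply: linearP.
Qed.
HB.instance Definition _ :=
  bilinear_isBilinear.Build C T2 T2 T2 *:%R *:%R (@mul2 C M) mul2_is_bilinear.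

Lemma mull_is_linear (x : M) : linear ( *%R x).
Proof. by move=> a u v; rewrite mulrDr scalerAr. Qed.
Lemma mulr_is_linear (y : M) : linear ( *%R^~ y).
Proof. by move=> a u v; rewrite mulrDl scalerAl. Qed.

Lemma mul2_t2 (a b c d : M) : mul2 (t2 a b) (t2 c d) = t2 (a * c) (b * d).
Proof.
rewrite mul2E lift2_t2; last split=> [y | x].
- rewrite lift2_t2 //; split=> [y | x] e u v /=.
    by rewrite mull_is_linear linearPl.
  by rewrite mull_is_linear linearPr.
- apply: (lift2_linear_family (B := fun x u v => t2 (x * u) (y * v))) => u v.
  by move=> e w w'; rewrite mulr_is_linear linearPl.
apply: (lift2_linear_family (B := fun y u v => t2 (x * u) (y * v))) => u v.
by move=> e w w'; rewrite mulr_is_linear linearPr.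
Qed.

Lemma mul3E s u : mul3 s u =
  lift3 (fun x y z => lift3 (fun x' y' z' => t3 (x * x') (y * y') (z * z')) u) s.
Proof.
apply: eq_bigr => i _; apply: eq_bigr => j _; apply: eq_bigr => k _.
rewrite scaler_sumr; apply: eq_bigr => i' _; rewrite scaler_sumr.
apply: eq_bigr => j' _; rewrite scaler_sumr.
by apply: eq_bigr => k' _; rewrite scalerA.
Qed.

Lemma mul3_is_bilinear : bilinear_for *:%R *:%R (@mul3 C M).
Proof.
split=> [u | s] a v w; rewrite !mul3E; first exact: linearP.
pose B u x y z := lift3 (fun x' y' z' => t3 (x * x') (y * y') (z * z')) u.
by apply: (lift3_linear_family (B := B)) => x y z; apply: linearP.
Qed.
HB.instance Definition _ :=
  bilinear_isBilinear.Build C T3 T3 T3 *:%R *:%R (@mul3 C M) mul3_is_bilinear.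

Lemma mul3_t3 (a b c a' b' c' : M) :
  mul3 (t3 a b c) (t3 a' b' c') = t3 (a * a') (b * b') (c * c').
Proof.
pose B x y z x' y' z' := t3 (x * x') (y * y') (z * z').
rewrite mul3E -/B lift3_t3; first last.
- move=> x y; apply: (lift3_linear_family (B := fun z => B x y z)) => x' y' z' e w w'.
  by rewrite /B mulr_is_linear t3_linear3.
- move=> x z; apply: (lift3_linear_family (B := fun y => B x y z)) => x' y' z' e w w'.
  by rewrite /B mulr_is_linear t3_linear2.
- move=> y z; apply: (lift3_linear_family (B := fun x => B x y z)) => x' y' z' e w w'.
  by rewrite /B mulr_is_linear t3_linear1.
rewrite lift3_t3 // => [y z | x z | x y] e w w'; rewrite /B mull_is_linear.
- exact: t3_linear1.
- exact: t3_linear2.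
- exact: t3_linear3.
Qed.

Definition slL_lmul (phi : M -> C) (t : T2) (b : M) : M := slL phi (mul2 (t2 b 1) t).
Definition slL_rmul (phi : M -> C) (t : T2) (b : M) : M := slL phi (mul2 t (t2 b 1)).

Lemma slL_lmul_is_linear phi t : linear (slL_lmul phi t).
Proof. by move=> a u v; rewrite /slL_lmul !linearPl linearP. Qed.
HB.instance Definition _ phi t :=
  GRing.isLinear.Build C M M *:%R (slL_lmul phi t) (slL_lmul_is_linear phi t).
Lemma slL_rmul_is_linear phi t : linear (slL_rmul phi t).
Proof. by move=> a u v; rewrite /slL_rmul linearPl linearPr linearP. Qed.
HB.instance Definition _ phi t :=
  GRing.isLinear.Build C M M *:%R (slL_rmul phi t) (slL_rmul_is_linear phi t).

Lemma mul2A : associative (@mul2 C M).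
Proof.
move=> r s t; move: r; apply: (eq_linear_T2 (s := *:%R)) => [a u v | a u v | a b] /=.
- by rewrite !linearPl.
- by rewrite !linearPl.
move: s; apply: (eq_linear_T2 (s := *:%R)) => [e u v | e u v | c d] /=.
- by rewrite linearPl linearPr.
- by rewrite linearPr !linearPl.
move: t; apply: (eq_linear_T2 (s := *:%R)) => [e u v | e u v | x y] /=.
- by rewrite !linearPr.
- by rewrite !linearPr.
by rewrite !mul2_t2 !mulrA.
Qed.

Section Contraction.
Variable phi : M -> C.
Hypothesis phiL : scalar phi.
HB.instance Definition _ := GRing.isLinear.Build C M C *%R phi phiL.

Lemma slL_t2 x y : slL phi (t2 x y) = phi x *: y.
Proof.
rewrite slLE lift2_t2 //; split=> [y' | x'] a u v /=.
  by rewrite linearP scalerDl scalerA.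
by rewrite scalerDr !scalerA mulrC.
Qed.

Lemma slR_t2 x y : slR phi (t2 x y) = phi y *: x.
Proof.
rewrite slRE lift2_t2 //; split=> [y' | x'] a u v /=.
  by rewrite scalerDr !scalerA mulrC.
by rewrite linearP scalerDl scalerA.
Qed.

Lemma slMid_t3 x y z : slMid phi (t3 x y z) = phi y *: t2 x z.
Proof.
rewrite slMidE lift3_t3 // => [y' z' | x' z' | x' y'] a u v /=.
- by rewrite linearPl scalerDr !scalerA mulrC.
- by rewrite linearP scalerDl scalerA.
- by rewrite linearPr scalerDr !scalerA mulrC.
Qed.

Lemma sl2_slL (psi : M -> C) t : sl2 psi phi t = phi (slL psi t).
Proof.
rewrite linear_sum; apply: eq_bigr => i _; rewrite linear_sum; apply: eq_bigr => j _.
by rewrite linearZ.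
Qed.

Lemma slL_lmul_t2 b x y : slL_lmul phi (t2 x y) b = phi (b * x) *: y.
Proof. by rewrite /slL_lmul mul2_t2 mul1r slL_t2. Qed.
Lemma slL_rmul_t2 b x y : slL_rmul phi (t2 x y) b = phi (x * b) *: y.
Proof. by rewrite /slL_rmul mul2_t2 mulr1 slL_t2. Qed.

Lemma slMid_mul3_ext s t :
  slMid phi (mul3 (ext_r s) (ext_l t)) = map2 id (slL_lmul phi t) s.
Proof.
move: s; apply: (eq_linear_T2 (s := *:%R)) => [e u v | e u v | a b] /=.
- by rewrite linearP linearPl linearP.
- exact: linearP.
rewrite map2r_t2; last exact: linearP.
rewrite ext_r_t2; move: t.
apply: (eq_linear_T2 (s := *:%R)) => [e u v | e u v | c d] /=.
- by rewrite linearP linearPr linearP.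
- by rewrite /slL_lmul linearPr linearP linearPr.
by rewrite ext_l_t2 mul3_t3 slMid_t3 slL_lmul_t2 mulr1 mul1r linearZr.
Qed.

Lemma map2_slR_mul s t :
  map2 (fun a => slR phi (mul2 (t2 1 a) s)) id t = map2 id (slL_rmul phi t) s.
Proof.
move: t; apply: (eq_linear_T2 (s := *:%R)) => [e u v | e u v | c d] /=.
- exact: linearP.
- apply: (lift2_linear_family (B := fun t x y => t2 x (slL_rmul phi t y))) => x y.
  by move=> e' w w'; rewrite /slL_rmul linearPl linearP linearPr.
rewrite map2l_t2; last by move=> e u v; rewrite linearPr linearPl linearP.
move: s; apply: (eq_linear_T2 (s := *:%R)) => [e u v | e u v | a b] /=.
- by rewrite linearPr linearP linearPl.
- exact: linearP.
rewrite map2r_t2; last exact: linearP.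
by rewrite mul2_t2 mul1r slR_t2 slL_rmul_t2 linearZl linearZr.
Qed.

Lemma slR_map2l (f : M -> M) t : linear f -> slR phi (map2 f id t) = f (slR phi t).
Proof.
move=> fL; move: t; apply: (eq_linear_T2 (s := *:%R)) => [e u v | e u v | x y] /=.
- by rewrite !linearP.
- by rewrite linearP fL.
by rewrite map2l_t2 // !slR_t2 (scalable_linear fL).
Qed.

Lemma slL_lmul_map2r (g : M -> M) s x :
  linear g -> slL_lmul phi (map2 id g s) x = g (slL_lmul phi s x).
Proof.
move=> gL; move: s; apply: (eq_linear_T2 (s := *:%R)) => [e u v | e u v | a b] /=.
- by rewrite /slL_lmul !linearP linearPr linearP.
- by rewrite /slL_lmul linearPr linearP gL.
by rewrite map2r_t2 // !slL_lmul_t2 (scalable_linear gL).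
Qed.

Lemma slL_mul2_t2_1 s w : slL phi (mul2 s (t2 1 w)) = slL phi s * w.
Proof.
move: s; apply: (eq_linear_T2 (s := *:%R)) => [e u v | e u v | x y] /=.
- by rewrite linearPl linearP.
- by rewrite linearP mulrDl scalerAl.
by rewrite mul2_t2 mulr1 !slL_t2 scalerAl.
Qed.

Lemma phi_slL_lmul t x : phi (slL_lmul phi t x) = phi (x * slR phi t).
Proof.
move: t; apply: (eq_linear_T2 (s := *%R)) => [e u v | e u v | a b] /=.
- by rewrite /slL_lmul linearPr !linearP.
- by rewrite linearP mulrDr -scalerAr linearP.
by rewrite slL_lmul_t2 slR_t2 -scalerAr !linearZ_LR /= mulrC.
Qed.

Lemma eq_slL_lmul t b b' :
  (forall w, phi (b * w) = phi (b' * w)) -> slL_lmul phi t b = slL_lmul phi t b'.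
Proof.
move=> bb'; move: t; apply: (eq_linear_T2 (s := *:%R)) => [e u v | e u v | x y] /=.
- by rewrite /slL_lmul linearPr linearP.
- by rewrite /slL_lmul linearPr linearP.
by rewrite !slL_lmul_t2 bb'.
Qed.

Section Involution.
Variable st : M -> M.
Hypothesis stL : linear_for conj_scale st.
Hypothesis stK : involutive st.
Hypothesis stM : forall x y, st (x * y) = st y * st x.
Hypothesis phi_st : forall x, phi (st x) = (phi x)^*.
HB.instance Definition _ := GRing.isLinear.Build C M M conj_scale st stL.

Lemma star2_is_antilinear : linear_for conj_scale (star2 st).
Proof.
move=> a s t /=; rewrite /star2 scaler_sumr -big_split; apply: eq_bigr => i _.
rewrite scaler_sumr -big_split; apply: eq_bigr => j _.
by rewrite !mxE rmorphD rmorphM scalerDl scalerA.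
Qed.
HB.instance Definition _ :=
  GRing.isLinear.Build C T2 T2 conj_scale (star2 st) star2_is_antilinear.

Lemma star2_t2 x y : star2 st (t2 x y) = t2 (st x) (st y).
Proof.
rewrite [in RHS](coord_sum x) [in RHS](coord_sum y) !linear_sum linear_sumlz.
apply: eq_bigr => i _; rewrite linear_sumr; apply: eq_bigr => j _.
by rewrite !linearZ_LR /= linearZl scalerA mxE rmorphM mulrC.
Qed.

Lemma star1 : st 1 = 1.
Proof. by rewrite -[st 1]mulr1 -[X in _ * X]stK -stM mulr1 stK. Qed.

Lemma star2K : involutive (star2 st).
Proof.
apply: (eq_linear_T2 (s := *:%R)) => [a u v | a u v | x y] //=.
- by rewrite !linearP /= conjCK.
by rewrite !star2_t2 !stK.
Qed.

Lemma star2_mul2 s t : star2 st (mul2 s t) = mul2 (star2 st t) (star2 st s).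
Proof.
move: s; apply: (eq_linear_T2 (s := conj_scale)) => [a u v | a u v | x y] /=.
- by rewrite linearPl linearP.
- by rewrite linearP /= linearPr.
move: t; apply: (eq_linear_T2 (s := conj_scale)) => [a u v | a u v | z w] /=.
- by rewrite linearPr linearP.
- by rewrite linearP /= linearPl.
by rewrite !star2_t2 !mul2_t2 !star2_t2 !stM.
Qed.

Lemma slL_lmul_star2 t b : slL_lmul phi (star2 st t) b = st (slL_rmul phi t (st b)).
Proof.
move: t; apply: (eq_linear_T2 (s := conj_scale)) => [a u v | a u v | x y] /=.
- by rewrite /slL_lmul linearP /= linearPr linearP.
- by rewrite /slL_rmul linearPl linearP linearP.
by rewrite star2_t2 slL_lmul_t2 slL_rmul_t2 linearZ_LR /= -phi_st stM stK.
Qed.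

Lemma star2_map2r_slL_rmul t s :
  star2 st (map2 id (slL_rmul phi t) s) = map2 id (slL_lmul phi (star2 st t)) (star2 st s).
Proof.
move: s; apply: (eq_linear_T2 (s := conj_scale)) => [a u v | a u v | x y] /=.
- by rewrite !linearP.
- by rewrite linearP /= linearP.
rewrite map2r_t2; last exact: linearP.
rewrite !star2_t2 map2r_t2; last exact: linearP.
by rewrite slL_lmul_star2 stK.
Qed.

Lemma map2_slL_rmul_star2 t s x : star2 st s = s ->
  map2 id (slL_rmul phi t) s = mul2 (t2 1 x) s <->
  map2 id (slL_lmul phi (star2 st t)) s = mul2 s (t2 1 (st x)).
Proof.
move=> s_star.
have -> : mul2 s (t2 1 (st x)) = star2 st (mul2 (t2 1 x) s).
  by rewrite star2_mul2 s_star star2_t2 star1.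
have -> : map2 id (slL_lmul phi (star2 st t)) s = star2 st (map2 id (slL_rmul phi t) s).
  by rewrite star2_map2r_slL_rmul s_star.
by split=> [-> // | /(inv_inj star2K)].
Qed.
End Involution.
End Contraction.
End Tensors.

Theorem proposition2p1p2 (R : realType) (M : falgType R[i]) (st : M -> M)
  (Delta : M -> T2 M) (S : M -> M) (eps : M -> R[i]) :
  cstar_alg st ->
  (* Delta : injective *-homomorphism, coassociative *)
  lin_T2 Delta ->
  (forall x y : M, Delta (x * y) = mul2 (Delta x) (Delta y)) ->
  (forall x : M, Delta (st x) = star2 st (Delta x)) ->
  injective Delta ->
  (forall x : M, DelL Delta (Delta x) = DelR Delta (Delta x)) ->
  (* S : linear unital antimultiplicative *-preserving involutive bijection *)
  lin_M S -> S 1 = 1 ->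
  (forall x y : M, S (x * y) = S y * S x) ->
  (forall x : M, S (st x) = st (S x)) ->
  bijective S ->
  (forall x : M, S (S x) = x) ->
  (forall x : M, map2 S S (Delta x) = flip (Delta (S x))) ->
  (* counit *)
  lin_C eps ->
  (forall x : M, slL eps (Delta x) = x) ->
  (forall x : M, slR eps (Delta x) = x) ->
  (forall x : M, eps (S x) = eps x) ->
  (forall x : M, eps (st x) = (eps x)^*) ->
  let e := Delta 1 in
  let eps_s := fun x : M => mu (map2 S id (Delta x)) in
  ((forall x y : M,
      sl2 eps eps (mul2 (mul2 (t2 x 1) e) (t2 1 y)) = eps (x * y))
   /\ (forall x : M, map2 eps_s id (Delta x) = mul2 (t2 1 x) e))
  <->
  ((forall x y : M,
      slL eps (mul2 (mul2 (t2 x 1) e) (t2 1 y)) = slL eps (mul2 (t2 x 1) (Delta y)))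
   /\ (forall x : M,
      slMid eps (mul3 (ext_r e) (ext_l (Delta x))) = mul2 e (t2 1 x))
   /\ (forall x : M, eps_s x = slR eps (mul2 (t2 1 x) e))).
Proof.
(* Only linearity of Δ and S, Δ(x^* ) = Δ(x)^*, the right counit law and
   ε(x^* ) = ε(x)^* are used. *)
move=> [[stL stK stM] _] DeltaL _ Delta_st _ _ _ _ _ _ _ _ _ epsL _ slR_eps_Delta _ eps_st.
move=> e eps_s.
have e_star : star2 st e = e by rewrite /e -Delta_st (star1 stK stM).
have eps_sL : linear eps_s by move=> a x y; rewrite /eps_s DeltaL !linearP.
have K_iff x : map2 id (slL_rmul eps (Delta x)) e = mul2 (t2 1 x) e <->
    map2 id (slL_lmul eps (Delta (st x))) e = mul2 e (t2 1 (st x)).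
  by rewrite Delta_st; apply: (map2_slL_rmul_star2 epsL stL stK stM eps_st).
have A3E y : slMid eps (mul3 (ext_r e) (ext_l (Delta y))) =
    map2 id (slL_lmul eps (Delta y)) e by exact: slMid_mul3_ext epsL _ _.
split=> [[H2 H3] | [A2 [A3 A4]]].
- have A4 x : eps_s x = slR eps (mul2 (t2 1 x) e).
    by rewrite -H3 (slR_map2l epsL _ eps_sL) slR_eps_Delta.
  have A3' y : map2 id (slL_lmul eps (Delta y)) e = mul2 e (t2 1 y).
    have K_sty : map2 id (slL_rmul eps (Delta (st y))) e = mul2 (t2 1 (st y)) e.
      by rewrite -(map2_slR_mul epsL) -H3; apply: eq_map2l => a; rewrite A4.
    by move/K_iff: K_sty; rewrite stK.
  split; [move=> x y | split=> // x]; last by rewrite A3E A3'.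
  rewrite -mul2A -[LHS]/(slL_lmul eps _ x) -A3' (slL_lmul_map2r epsL _ _ (linearP _)).
  apply: (eq_slL_lmul epsL) => w.
  by rewrite /slL_lmul -(slL_mul2_t2_1 epsL) -(sl2_slL epsL) H2.
- have A3' y : map2 id (slL_lmul eps (Delta y)) e = mul2 e (t2 1 y) by rewrite -A3E.
  split=> [x y | x].
    rewrite (sl2_slL epsL) A2 -[slL _ _]/(slL_lmul eps _ x) (phi_slL_lmul epsL).
    by rewrite slR_eps_Delta.
  rewrite (eq_map2l _ A4) (map2_slR_mul epsL); apply/K_iff; exact: A3'.
Qed.
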